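(* Let $n\ge2$ and $\tau\in\mathbb{C}^\times$. With $\Delta$ and $\tilde\Delta$ as in the context, $$\tilde\Delta(x_1,\dots,x_{n-2}\,|\,z_1,\dots,z_n)=\prod_{j=2}^n\frac{z_j-z_1\tau^{2n-2}}{z_j-z_1\tau^2}\,\Delta(x_1,\dots,x_{n-2}\,|\,z_1,\dots,z_n)$$ as rational functions of $x_1,\dots,x_{n-2},z_1,\dots,z_n$.
   Context: For $\lambda\ge1$, $A_\lambda(x|z_1,\dots,z_n)=\sum_{\kappa=0}^{\lambda}(-1)^\kappa x^{\lambda-\kappa}\big(\tau^{n(\lambda-\kappa)+\kappa}-\tau^{-n(\lambda-\kappa)-\kappa}\big)\sigma_\kappa(z_1,\dots,z_n)$, where $\sigma_\kappa$ is the $\kappa$-th elementary symmetric polynomial ($\sigma_\kappa=0$ for $\kappa>n$); $\Delta(x_1,\dots,x_{n-2}|z_1,\dots,z_n)=\det\big(A_\lambda(x_\mu|z_1,\dots,z_n)\big)_{1\le\lambda,\mu\le n-2}$. Define $\tilde A_\lambda(x|z_1,\dots,z_n)=\frac{x-z_1\tau^{n-1}}{x-z_1\tau^{n+1}}A_\lambda(x|z_1\tau^{2n},z_2,\dots,z_n)+\frac{z_1\tau^{n+1}}{x}\Big\{\tau^{-2}\prod_{j=2}^n\frac{x\tau^{n-1}-z_j}{z_1\tau^2-z_j}-\frac{x-z_1\tau^{n-1}}{x-z_1\tau^{n+1}}\prod_{j=2}^n\frac{x\tau^{-n+1}-z_j}{z_1\tau^2-z_j}\Big\}A_\lambda(z_1\tau^{n+1}|z_1\tau^{2n},z_2,\dots,z_n)$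 and $\tilde\Delta(x_1,\dots,x_{n-2}|z_1,\dots,z_n)=\det\big(\tilde A_\lambda(x_\mu|z_1,\dots,z_n)\big)_{1\le\lambda,\mu\le n-2}$ (empty determinants equal $1$). *)

From HB Require Import structures.
From mathcomp Require Import all_boot all_order all_algebra.
From mathcomp Require Import complex.
From mathcomp Require Import reals.
Set Implicit Arguments. Unset Strict Implicit. Unset Printing Implicit Defensive.
Import Order.TTheory GRing.Theory Num.Theory.
Local Open Scope ring_scope.

(* Variables are 1-based: z : nat -> F with z 1, ..., z n meaningful;
   x : nat -> F with x 1, ..., x (n-2) meaningful. *)
Section Defs.
Variable F : fieldType.

Definition esym (n k : nat) (z : nat -> F) : F :=
  \sum_(S : {set 'I_n} | #|S| == k) \prod_(i in S) z i.+1.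

Definition A (n : nat) (tau : F) (lam : nat) (x : F) (z : nat -> F) : F :=
  \sum_(0 <= k < lam.+1)
     (-1) ^+ k * x ^+ (lam - k)
     * (tau ^+ (n * (lam - k) + k) - tau ^- (n * (lam - k) + k))
     * esym n k z.

Definition zshift (n : nat) (tau : F) (z : nat -> F) : nat -> F :=
  fun i => if i == 1%N then z 1%N * tau ^+ (2 * n) else z i.

Definition Atilde (n : nat) (tau : F) (lam : nat) (x : F) (z : nat -> F) : F :=
  let z1 := z 1%N in
  let r := (x - z1 * tau ^+ (n - 1)) / (x - z1 * tau ^+ n.+1) in
  r * A n tau lam x (zshift n tau z)
  + z1 * tau ^+ n.+1 / x *
    (tau ^- 2 * \prod_(2 <= j < n.+1) ((x * tau ^+ (n - 1) - z j) / (z1 * tau ^+ 2 - z j))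
     - r * \prod_(2 <= j < n.+1) ((x * tau ^- (n - 1) - z j) / (z1 * tau ^+ 2 - z j)))
    * A n tau lam (z1 * tau ^+ n.+1) (zshift n tau z).

Definition Delta (n : nat) (tau : F) (x z : nat -> F) : F :=
  \det (\matrix_(i < n - 2, j < n - 2) A n tau i.+1 (x j.+1) z).

Definition Deltatilde (n : nat) (tau : F) (x z : nat -> F) : F :=
  \det (\matrix_(i < n - 2, j < n - 2) Atilde n tau i.+1 (x j.+1) z).
End Defs.

Set Warnings "-notation-overridden,-ambiguous-paths".
From Pilot Require Import Defs.
From HB Require Import structures.
From mathcomp Require Import all_boot all_order all_algebra.
From mathcomp Require Import complex.
From mathcomp Require Import reals.
From mathcomp Require Import ring zify.
Import Order.TTheory GRing.Theory Num.Theory.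
Local Open Scope ring_scope.
Set Implicit Arguments. Unset Strict Implicit. Unset Printing Implicit Defensive.

(* Put a = z1 τ^(n+1) and z' = (z1 τ^(2n), z2, ..., zn), so that
   Ã_λ(x) = r(x) A_λ(x | z') + K(x) A_λ(a | z').  Subtracting z1 τ times each row of
   (Ã_λ(x_μ)) from the next one gives, with A_λ = A_λ(. | z),
     Ã_{λ+1} - z1 τ Ã_λ = A_{λ+1} - z1 τ^(2n-1) A_λ + (r + K - 1) d_λ,
   and r(x) + K(x) - 1 = Σ_λ c_λ A_λ(x) / G0 is itself a combination of the rows of
   (A_λ(x_μ)), where G0 = ∏_{j≥2} (z1 τ² - z_j); the sum is evaluated through divided
   differences of g(y) = ∏_{j≥2} (y - z_j).  With the unitriangular bidiagonal matrices
   L(c) = 1 - c (subdiagonal) this reads L(z1 τ) Ã = (L(z1 τ^(2n-1)) + d c^T / G0) A.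
   Writing c^T = h^T L(z1 τ^(2n-1)), the matrix determinant lemma gives
   det Ã = (1 + h.d / G0) det A, and G0 + h.d = ∏_{j≥2} (z1 τ^(2n-2) - z_j) is checked
   coefficientwise in the elementary symmetric functions of z2, ..., zn. *)

Section ElementarySymmetric.
Variable F : fieldType.
Implicit Types (z w : nat -> F).

Lemma esym0 n z : Defs.esym n 0 z = 1.
Proof.
rewrite /Defs.esym (eq_bigl (pred1 set0)) ?big_pred1_eq ?big_set0 // => S.
by rewrite /= cards_eq0.
Qed.

Lemma esym_eq0 n k z : (n < k)%N -> Defs.esym n k z = 0.
Proof.
move=> lt_n_k; rewrite /Defs.esym big_pred0 // => S; apply/negbTE/eqP => cardS.
by move: (max_card S); rewrite cardS card_ord leqNgt lt_n_k.
Qed.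

Lemma eq_esym n k z w : (forall i, (0 < i <= n)%N -> z i = w i) ->
  Defs.esym n k z = Defs.esym n k w.
Proof.
move=> eq_zw; apply: eq_bigr => S _; apply: eq_bigr => i _; apply: eq_zw.
by rewrite ltn_ord.
Qed.

Lemma coef_prod_esym n z k : (\prod_(i < n) (1 + z i.+1 *: 'X))`_k = Defs.esym n k z.
Proof.
under eq_bigr => i _ do rewrite addrC.
rewrite bigA_distr coef_sum /Defs.esym [RHS]big_mkcond /=.
apply: eq_bigr => S _.
rewrite -big_mkcond /= scaler_prodr coefZ coefXn eq_sym.
by case: eqP => _; rewrite ?mulr1 ?mulr0.
Qed.

Lemma esymS n z k :
  Defs.esym n.+1 k.+1 z = Defs.esym n k.+1 (z \o succn) + z 1%N * Defs.esym n k (z \o succn).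
Proof.
rewrite -!coef_prod_esym big_ord_recl mulrDl mul1r coefD -scalerAl coefZ.
by rewrite coefXM.
Qed.

End ElementarySymmetric.

Section ReversedHorner.
Variable F : fieldType.
Implicit Types (w : nat -> F) (y u c : F).

Definition rhorner (f : nat -> F) (y : F) (m : nat) : F :=
  \sum_(k < m) f k * y ^+ (m.-1 - k).

Lemma rhorner0 f y : rhorner f y 0 = 0.
Proof. by rewrite /rhorner big_ord0. Qed.

Lemma rhornerS f y m : rhorner f y m.+1 = y * rhorner f y m + f m.
Proof.
rewrite /rhorner big_ord_recr /= subnn expr0 mulr1; congr (_ + _).
rewrite mulr_sumr; apply: eq_bigr => -[k /= lt_k_m] _.
by rewrite mulrCA -exprS; case: m lt_k_m => // m lt_k_m; rewrite subSn.
Qed.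

Lemma rhorner1 f y : rhorner f y 1 = f 0%N.
Proof. by rewrite rhornerS rhorner0 mulr0 add0r. Qed.

Lemma rhornerSl f y m : rhorner f y m.+1 = f 0%N * y ^+ m + rhorner (f \o succn) y m.
Proof.
rewrite /rhorner big_ord_recl subn0; congr (_ + _); apply: eq_bigr => i _.
by rewrite /= subnS predn_sub.
Qed.

Lemma rhorner_scale f s y m :
  rhorner (fun k => f k * s ^+ k) (y * s) m = s ^+ m.-1 * rhorner f y m.
Proof.
rewrite /rhorner mulr_sumr; apply: eq_bigr => -[k /= lt_k_m] _.
rewrite exprMn mulrCA -mulrA -exprD subnKC; first by ring.
by case: m lt_k_m.
Qed.

Lemma rhorner_mul1subX (f g : nat -> F) c y :
  f 0%N = g 0%N -> (forall k, f k.+1 = g k.+1 - c * g k) ->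
  forall m, rhorner f y m.+1 = rhorner g y m.+1 - c * rhorner g y m.
Proof.
move=> f0 fS; elim=> [|m IHm]; first by rewrite !rhornerS !rhorner0 f0; ring.
by rewrite rhornerS IHm fS [rhorner g y m.+2]rhornerS [rhorner g y m.+1]rhornerS; ring.
Qed.

Lemma rhorner_divided_difference f y u m :
  (y - u) * rhorner (fun i => rhorner f y i.+1) u m
  = rhorner f y m.+1 - rhorner f u m.+1.
Proof.
elim: m => [|m IHm]; first by rewrite rhorner0 !rhorner1; ring.
rewrite rhornerS mulrDr mulrCA IHm [rhorner f y m.+2]rhornerS.
by rewrite [rhorner f u m.+2]rhornerS; ring.
Qed.

Lemma prod_subr_esym m w y :
  \prod_(i < m) (y - w i.+1) = rhorner (fun k => (-1) ^+ k * Defs.esym m k w) y m.+1.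
Proof.
elim: m w => [|m IHm] w; first by rewrite big_ord0 rhorner1 esym0 mulr1.
rewrite big_ord_recl (IHm (w \o succn)).
rewrite (rhorner_mul1subX (f := fun k => (-1) ^+ k * Defs.esym m.+1 k w)
  (g := fun k => (-1) ^+ k * Defs.esym m k (w \o succn)) (c := w 1%N)).
- by rewrite [rhorner _ y m.+2]rhornerS esym_eq0 //; ring.
- by rewrite !esym0.
- by move=> k; rewrite esymS exprS; ring.
Qed.

End ReversedHorner.

Lemma det_1addmx_rank1 (R : comNzRingType) m (u : 'cV[R]_m) (v : 'rV[R]_m) :
  \det (1%:M + u *m v) = 1 + (v *m u) 0 0.
Proof.
set Y : 'M_(m + 1) := block_mx 1%:M u (- v) 1%:M.
set U : 'M_(m + 1) := block_mx 1%:M (- u) 0 1%:M.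
have detU : \det U = 1 by rewrite det_ublock !det1 mulr1.
have YU : Y *m U = block_mx 1%:M 0 (- v) (1%:M + v *m u).
  rewrite mulmx_block !mul1mx !mulmx1 !mulmx0 ?mul0mx !addr0 mulmxN mulNmx opprK.
  by rewrite addNr addrC.
have UY : U *m Y = block_mx (1%:M + u *m v) 0 (- v) 1%:M.
  rewrite mulmx_block !mul1mx !mulmx1 ?mulmx0 ?mul0mx ?add0r ?addr0 ?mulNmx ?mulmxN ?opprK.
  by rewrite subrr.
have := congr1 determinant UY; rewrite det_mulmx detU mul1r det_lblock det1 mulr1 => <-.
have := congr1 determinant YU; rewrite det_mulmx detU mulr1 det_lblock det1 mul1r => ->.
by rewrite det_mx11 !mxE eqxx mulr1n.
Qed.

Section Bidiagonal.
Variable R : comNzRingType.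
Implicit Types c : R.

Definition bidiag N c : 'M[R]_N :=
  \matrix_(i, j) ((i == j)%:R - c * (i == j.+1 :> nat)%:R).

Lemma det_bidiag N c : \det (bidiag N c) = 1.
Proof.
rewrite det_trig.
  by rewrite big1 // => i _; rewrite mxE eqxx (ltn_eqF (ltnSn i)) mulr0 subr0.
apply/is_trig_mxP => i j lt_ij; rewrite mxE.
have -> : (i == j) = false by apply: ltn_eqF.
by rewrite (ltn_eqF (leqW lt_ij)) mulr0 subr0.
Qed.

Lemma bidiag_mulmx N p c (f : nat -> 'I_p -> R) : (forall j, f 0%N j = 0) ->
  bidiag N c *m \matrix_(i < N, j < p) f i.+1 j = \matrix_(i, j) (f i.+1 j - c * f i j).
Proof.
move=> f0; apply/matrixP => i j; rewrite !mxE.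
under eq_bigr do rewrite !mxE mulrBl -mulrA.
rewrite sumrB -mulr_sumr; congr (_ - c * _).
  rewrite (bigD1 i) //= eqxx mul1r big1 ?addr0 // => k /negbTE.
  by rewrite eq_sym => ->; rewrite mul0r.
case: i => [[|i] lt_i_N] /=; first by rewrite f0 big1 // => k _; rewrite mul0r.
rewrite (bigD1 (Ordinal (ltnW lt_i_N))) //= eqxx mul1r big1 ?addr0 // => k.
by rewrite -val_eqE /= eq_sym eqSS => /negbTE ->; rewrite mul0r.
Qed.

Lemma row_mulmx_bidiag N c (h : nat -> R) : h N = 0 ->
  (\row_(j < N) h j) *m bidiag N c = \row_j (h j - c * h j.+1).
Proof.
move=> hN; apply/matrixP => i k; rewrite !mxE.
under eq_bigr do rewrite !mxE mulrBr mulrCA.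
rewrite sumrB -mulr_sumr; congr (_ - c * _).
  rewrite (bigD1 k) //= eqxx mulr1 big1 ?addr0 // => j /negbTE ->.
  by rewrite mulr0.
have [lt_kS_N | le_N_kS] := ltnP k.+1 N.
  rewrite (bigD1 (Ordinal lt_kS_N)) //= eqxx mulr1 big1 ?addr0 // => j.
  by rewrite -val_eqE /= => /negbTE ->; rewrite mulr0.
have -> : k.+1 = N by apply/eqP; rewrite eqn_leq le_N_kS ltn_ord.
by rewrite hN big1 // => j _; rewrite ltn_eqF // mulr0.
Qed.

End Bidiagonal.

Lemma A_rhorner (F : fieldType) n tau lam x (z : nat -> F) :
  A n tau lam x z =
    rhorner (fun k => (-1) ^+ k * Defs.esym n k z * tau ^+ k) (x * tau ^+ n) lam.+1
  - rhorner (fun k => (-1) ^+ k * Defs.esym n k z * tau^-1 ^+ k) (x * tau^-1 ^+ n) lam.+1.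
Proof.
rewrite /A big_mkord /rhorner -sumrB; apply: eq_bigr => k _.
by rewrite -exprVn !exprD !exprM !exprMn /=; ring.
Qed.

Lemma A0 (F : fieldType) n tau x (z : nat -> F) : A n tau 0 x z = 0.
Proof. by rewrite /A big_nat1 subnn muln0 !expr0 invr1 subrr mulr0 mul0r. Qed.

Section Proposition.
Variables (F : fieldType) (N : nat) (tau : F) (z : nat -> F).
Hypothesis tau_neq0 : tau != 0.
Local Notation n := N.+2.
Local Notation z1 := (z 1%N).

Definition etail (k : nat) : F := Defs.esym N.+1 k (z \o succn).

Definition Vtail (s x : F) (m : nat) : F :=
  rhorner (fun k => (-1) ^+ k * etail k * s ^+ k) (x * s ^+ n) m.

Lemma Vtail1 s x : Vtail s x 1 = 1.
Proof. by rewrite /Vtail rhorner1 /etail esym0 !mulr1. Qed.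

Lemma VtailS s x m : Vtail s x m.+1 = x * s ^+ n * Vtail s x m + (-1) ^+ m * etail m * s ^+ m.
Proof. exact: rhornerS. Qed.

Lemma A_Vtail c z' lam x :
  z' 1%N = c -> (forall i, (1 < i)%N -> z' i = z i) ->
  A n tau lam x z' = (Vtail tau x lam.+1 - c * tau * Vtail tau x lam)
                   - (Vtail tau^-1 x lam.+1 - c * tau^-1 * Vtail tau^-1 x lam).
Proof.
move=> z'1 z'_tail; rewrite A_rhorner.
suff split_s s : rhorner (fun k => (-1) ^+ k * Defs.esym n k z' * s ^+ k) (x * s ^+ n) lam.+1
                 = Vtail s x lam.+1 - c * s * Vtail s x lam by rewrite !split_s.
apply: rhorner_mul1subX => [|k]; first by rewrite /etail !esym0.
have z'_succ i : (0 < i <= N.+1)%N -> (z' \o succn) i = (z \o succn) i.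
  by case/andP => i_gt0 _; apply: z'_tail.
by rewrite esymS z'1 /etail !(eq_esym _ z'_succ) !exprS; ring.
Qed.

Definition gtail (y : F) : F := \prod_(2 <= j < n.+1) (y - z j).
Local Notation G0 := (gtail (z1 * tau ^+ 2)).

Lemma gtail_rhorner y : gtail y = rhorner (fun k => (-1) ^+ k * etail k) y n.
Proof.
rewrite /gtail (big_addn 0 _ 2) subn2 big_mkord /etail -prod_subr_esym.
by apply: eq_bigr => i _; rewrite addn2.
Qed.

Lemma Vtail_gtail s x : Vtail s x n = s ^+ N.+1 * gtail (x * s ^+ N.+1).
Proof.
by rewrite /Vtail exprSr mulrA (rhorner_scale (fun k => (-1) ^+ k * etail k)) gtail_rhorner.
Qed.

Definition pole : F := z1 * tau ^+ n.+1.
Definition rfac (x : F) : F := (x - z1 * tau ^+ N.+1) / (x - pole).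
Definition kfac (x : F) : F :=
  pole / x * (tau ^- 2 * gtail (x * tau ^+ N.+1) - rfac x * gtail (x * tau ^- N.+1)) / G0.

Lemma Atilde_split lam (x : F) : Atilde n tau lam x z
  = rfac x * A n tau lam x (zshift n tau z) + kfac x * A n tau lam pole (zshift n tau z).
Proof.
rewrite /Atilde subn1 /= !prodf_div /kfac /rfac /pole.
rewrite -/(gtail (x * tau ^+ N.+1)) -/(gtail (x / tau ^+ N.+1)) -/(gtail (z1 * tau ^+ 2)).
ring.
Qed.

Definition q : F := tau ^+ (2 * N.+1).

(* dcoef m = A_{m+1}(pole | zshift z) - z1 tau A_m(pole | zshift z), the coefficient of
   kfac x in Atilde_rowop. *)
Definition dcoef (m : nat) : F := (-1) ^+ m.+1 *
  (tau ^+ m.+1 * (etail m.+1 + z1 * etail m)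
   - tau ^- m.+1 * (etail m.+1 + z1 * tau ^+ (2 * n) * etail m)).

Lemma A_Vtail_z lam x : A n tau lam x z = (Vtail tau x lam.+1 - z1 * tau * Vtail tau x lam)
  - (Vtail tau^-1 x lam.+1 - z1 * tau^-1 * Vtail tau^-1 x lam).
Proof. exact: A_Vtail. Qed.

Lemma A_Vtail_zshift lam x : A n tau lam x (zshift n tau z) =
  (Vtail tau x lam.+1 - z1 * tau ^+ (2 * n) * tau * Vtail tau x lam)
  - (Vtail tau^-1 x lam.+1 - z1 * tau ^+ (2 * n) * tau^-1 * Vtail tau^-1 x lam).
Proof. by apply: A_Vtail => [|i /gtn_eqF]; rewrite /zshift ?eqxx // => ->. Qed.

Lemma Atilde_rowop m (x : F) : x != pole ->
  Atilde n tau m.+1 x z - z1 * tau * Atilde n tau m x z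
  = A n tau m.+1 x z - z1 * tau * q * A n tau m x z + (rfac x + kfac x - 1) * dcoef m.
Proof.
move=> x_neq_pole; rewrite !Atilde_split !A_Vtail_zshift !A_Vtail_z !VtailS /rfac /dcoef /q.
set K := kfac x; rewrite /pole !exprVn !mul2n -!addnn !exprD !exprS.
set T := tau ^+ N; set pm := tau ^+ m.
have T_neq0 : T != 0 by rewrite expf_neq0.
have pm_neq0 : pm != 0 by rewrite expf_neq0.
move: x_neq_pole; rewrite /pole !exprS -/T -subr_eq0 => x_neq_pole.
by field; rewrite pm_neq0 tau_neq0 x_neq_pole T_neq0.
Qed.

Definition ccoef (k : nat) : F := tau ^+ N.+1 * (z1 * tau) ^+ (N.+1 - k).

Lemma sum_ccoef (f : nat -> F) :
  \sum_(i < N) ccoef i.+1 * f i = tau ^+ N.+1 * (z1 * tau) * rhorner f (z1 * tau) N.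
Proof.
rewrite /rhorner /ccoef !mulr_sumr; apply: eq_bigr => -[i /= lt_i_N] _.
have -> : (N.+1 - i.+1 = (N.-1 - i).+1)%N by lia.
by rewrite [(z1 * tau) ^+ _.+1]exprS; ring.
Qed.

Lemma sum_ccoef_Vtail (s x : F) :
  \sum_(i < N) ccoef i.+1 * (Vtail s x i.+2 - z1 * s * Vtail s x i.+1)
  = tau ^+ N.+1 * ((z1 * tau - z1 * s) * rhorner (fun i => Vtail s x i.+1) (z1 * tau) N.+1
                   - (z1 * tau) ^+ N.+1 + z1 * s * Vtail s x N.+1).
Proof.
set T := rhorner _ _ N.+1.
have T_head : T = (z1 * tau) ^+ N + rhorner (fun i => Vtail s x i.+2) (z1 * tau) N.
  by rewrite /T rhornerSl Vtail1 mul1r.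
have T_last : T = z1 * tau * rhorner (fun i => Vtail s x i.+1) (z1 * tau) N + Vtail s x N.+1.
  exact: rhornerS.
under eq_bigr do rewrite mulrBr mulrCA.
rewrite sumrB -mulr_sumr (sum_ccoef (fun i => Vtail s x i.+2)).
rewrite (sum_ccoef (fun i => Vtail s x i.+1)) mulrBl {1}T_head T_last [(z1 * tau) ^+ N.+1]exprS.
ring.
Qed.

Lemma sum_ccoef_A (x : F) : x != 0 -> x != pole ->
  \sum_(i < N) ccoef i.+1 * A n tau i.+1 x z
  = z1 * tau ^+ N.+1 * (gtail (x * tau ^+ N.+1) - gtail (x * tau ^- N.+1)) / x
    - z1 * tau ^+ N.+1 * (tau ^+ 2 - 1) * (gtail (x * tau ^- N.+1) - G0) / (x - pole).
Proof.
move=> x_neq0 x_neq_pole.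
have tauV_neq0 : tau^-1 != 0 by rewrite invr_eq0.
have shift_neq0 : x * tau^-1 ^+ n - z1 * tau != 0.
  have -> : x * tau^-1 ^+ n - z1 * tau = (x - pole) * tau^-1 ^+ n.
    by rewrite /pole exprVn !exprS; field; rewrite tau_neq0 expf_neq0.
  by rewrite mulf_neq0 ?subr_eq0 ?expf_neq0.
under eq_bigr do rewrite A_Vtail_z mulrBr.
rewrite sumrB !sum_ccoef_Vtail subrr mul0r.
set T := rhorner _ _ N.+1.
have T_eq : (x * tau^-1 ^+ n - z1 * tau) * T = Vtail tau^-1 x n - tau^-1 ^+ N.+1 * G0.
  rewrite /T rhorner_divided_difference; congr (_ - _).
  have -> : z1 * tau = z1 * tau ^+ 2 * tau^-1 by rewrite expr2 mulrA mulfK.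
  by rewrite (rhorner_scale (fun k => (-1) ^+ k * etail k)) gtail_rhorner.
have V_last (s : F) : x * s ^+ n * Vtail s x N.+1
                = s ^+ N.+1 * gtail (x * s ^+ N.+1) - (-1) ^+ N.+1 * etail N.+1 * s ^+ N.+1.
  by rewrite -Vtail_gtail [Vtail s x n]VtailS addrK.
have xs_neq0 (s : F) : s != 0 -> x * s ^+ n != 0 by move=> s_neq0; rewrite mulf_neq0 ?expf_neq0.
rewrite (canRL (mulKf shift_neq0) T_eq) Vtail_gtail.
rewrite (canRL (mulKf (xs_neq0 _ tau_neq0)) (V_last tau)).
rewrite (canRL (mulKf (xs_neq0 _ tauV_neq0)) (V_last tau^-1)).
move: x_neq_pole; rewrite /pole !exprVn !exprS; set P := tau ^+ N => x_neq_pole.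
have P_neq0 : P != 0 by rewrite expf_neq0.
by field; rewrite subr_eq0 x_neq_pole x_neq0 P_neq0 tau_neq0.
Qed.

Lemma sum_ccoef_A_rfac_kfac (x : F) : x != 0 -> x != pole -> G0 != 0 ->
  \sum_(i < N) ccoef i.+1 * A n tau i.+1 x z = G0 * (rfac x + kfac x - 1).
Proof.
move=> x_neq0 x_neq_pole G0_neq0; rewrite sum_ccoef_A // /kfac /rfac.
move: x_neq_pole; rewrite /pole -subr_eq0 [tau ^+ N.+3]exprS [tau ^+ N.+2]exprS.
by move=> x_neq_pole; field; rewrite x_neq_pole x_neq0 G0_neq0 tau_neq0.
Qed.

Definition hcoef (k : nat) : F := ccoef k * \sum_(j < N.+1 - k) q ^+ j.

Lemma hcoef_eq0 k : (N < k)%N -> hcoef k = 0.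
Proof. by rewrite /hcoef -subn_eq0 => /eqP ->; rewrite big_ord0 mulr0. Qed.

Lemma hcoefS k : (k <= N)%N -> hcoef k = ccoef k + z1 * tau * q * hcoef k.+1.
Proof.
move=> le_k_N; rewrite /hcoef /ccoef subSS (subSn le_k_N) big_ord_recl expr0.
under eq_bigr do rewrite exprS.
by rewrite -mulr_sumr [(z1 * tau) ^+ _.+1]exprS; ring.
Qed.

Definition hd_coef (k : nat) : F := hcoef k * (tau ^+ k - tau ^- k)
  - z1 * hcoef k.+1 * (tau ^+ k.+1 - tau ^- k.+1 * tau ^+ (2 * n)).

Lemma hd_coef_closed k : (k <= N.+1)%N ->
  hd_coef k = (z1 * q) ^+ (N.+1 - k) - (z1 * tau ^+ 2) ^+ (N.+1 - k).
Proof.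
rewrite leq_eqVlt ltnS => /predU1P[-> | le_k_N].
  by rewrite /hd_coef !hcoef_eq0 // subnn !expr0 subrr; ring.
have tau2n : tau ^+ (2 * n) = q * tau ^+ 2 by rewrite /q -exprD; congr (_ ^+ _); lia.
have tauN : tau ^+ N = tau ^+ (N - k) * tau ^+ k by rewrite -exprD subnK.
have q_eq : q = (tau * tau ^+ N) ^+ 2 by rewrite /q -exprS -exprM mulnC.
have geom : q ^+ (N - k) = (q - 1) * \sum_(j < N - k) q ^+ j + 1 by rewrite -subrX1 subrK.
rewrite /hd_coef (hcoefS le_k_N) /hcoef /ccoef !subSS (subSn le_k_N) tau2n.
rewrite ![_ ^+ (N - k).+1]exprS ![_ ^+ k.+1]exprS ![_ ^+ N.+1]exprS !exprMn geom.
set G := \sum_(j < N - k) _.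
rewrite q_eq tauN; set P := tau ^+ k.
have P_neq0 : P != 0 by rewrite expf_neq0.
by field; rewrite P_neq0 tau_neq0.
Qed.

Lemma sum_hcoef_dcoef_esym :
  \sum_(i < N) hcoef i.+1 * dcoef i = \sum_(k < N.+2) (-1) ^+ k * etail k * hd_coef k.
Proof.
under [RHS]eq_bigr do rewrite /hd_coef mulrBr.
rewrite sumrB big_ord_recl big_ord_recr !big_ord_recr /= !(@hcoef_eq0 N.+1) //.
rewrite (@hcoef_eq0 N.+2) // expr0 invr1 subrr !(mulr0, mul0r, subr0, add0r, addr0).
rewrite -sumrB; apply: eq_bigr => i _.
by rewrite /dcoef /bump /= add1n [(-1) ^+ i.+1]exprS; ring.
Qed.

Lemma G0_add_sum_hcoef_dcoef : G0 + \sum_(i < N) hcoef i.+1 * dcoef i = gtail (z1 * q).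
Proof.
rewrite sum_hcoef_dcoef_esym !gtail_rhorner /rhorner -big_split.
apply: eq_bigr => -[k /= lt_k_n] _; rewrite hd_coef_closed //; ring.
Qed.

Definition Amx (x : nat -> F) : 'M[F]_N := \matrix_(i, j) A n tau i.+1 (x j.+1) z.
Definition Atildemx (x : nat -> F) : 'M[F]_N := \matrix_(i, j) Atilde n tau i.+1 (x j.+1) z.

Lemma bidiag_mul_Atildemx (x : nat -> F) :
  (forall mu, (mu < N)%N -> x mu.+1 != 0 /\ x mu.+1 != pole) -> G0 != 0 ->
  bidiag N (z1 * tau) *m Atildemx x
  = (bidiag N (z1 * tau * q) + G0^-1 *: (\col_i dcoef i *m \row_j ccoef j.+1)) *m Amx x.
Proof.
move=> x_ok G0_neq0.
rewrite /Atildemx (bidiag_mulmx _ _ (f := fun i j => Atilde n tau i (x j.+1) z)) => [|j];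
  last by rewrite Atilde_split !A0 !mulr0 addr0.
rewrite mulmxDl /Amx (bidiag_mulmx _ _ (f := fun i j => A n tau i (x j.+1) z)) => [|j];
  last exact: A0.
rewrite -scalemxAl -mulmxA; apply/matrixP => i mu; rewrite !mxE big_ord1 !mxE.
under eq_bigr do rewrite !mxE.
have [x_neq0 x_neq_pole] := x_ok mu (ltn_ord mu).
rewrite sum_ccoef_A_rfac_kfac // Atilde_rowop //.
by field.
Qed.

Lemma row_hcoef_mul_bidiag :
  \row_(j < N) hcoef j.+1 *m bidiag N (z1 * tau * q) = \row_j ccoef j.+1.
Proof.
rewrite (row_mulmx_bidiag _ (h := fun j => hcoef j.+1)) ?hcoef_eq0 //.
by apply/matrixP => i j; rewrite !mxE (hcoefS (ltn_ord j)) addrK.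
Qed.

Lemma det_Atildemx (x : nat -> F) :
  (forall mu, (mu < N)%N -> x mu.+1 != 0 /\ x mu.+1 != pole) -> G0 != 0 ->
  \det (Atildemx x) = gtail (z1 * q) / G0 * \det (Amx x).
Proof.
move=> x_ok G0_neq0.
have rank1_factor :
  bidiag N (z1 * tau * q) + G0^-1 *: (\col_i dcoef i *m \row_j ccoef j.+1)
  = (1%:M + (G0^-1 *: \col_i dcoef i) *m \row_j hcoef j.+1) *m bidiag N (z1 * tau * q).
  by rewrite mulmxDl mul1mx -mulmxA row_hcoef_mul_bidiag scalemxAl.
rewrite -[LHS]mul1r -{1}(det_bidiag N (z1 * tau)) -det_mulmx bidiag_mul_Atildemx //.
rewrite rank1_factor !det_mulmx det_bidiag mulr1 det_1addmx_rank1 -G0_add_sum_hcoef_dcoef.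
rewrite -scalemxAr mxE mxE.
under eq_bigr do rewrite !mxE.
by field.
Qed.

End Proposition.

Unset Implicit Arguments.

Theorem proposition4p3 (R : realType) (n : nat) (tau : R[i])
    (x z : nat -> R[i]) :
  (2 <= n)%N -> tau != 0 ->
  (forall mu, (1 <= mu <= n - 2)%N ->
     x mu != 0 /\ x mu != z 1%N * tau ^+ n.+1) ->
  (forall j, (2 <= j <= n)%N -> z j != z 1%N * tau ^+ 2) ->
  Deltatilde n tau x z
  = \prod_(2 <= j < n.+1) ((z j - z 1%N * tau ^+ (2 * n - 2)) / (z j - z 1%N * tau ^+ 2))
    * Delta n tau x z.
Proof.
move=> le_2_n tau_neq0 x_ok z_ok; rewrite /Deltatilde /Delta.
(* N.+2 - 2 does not reduce to N, so n - 2 is abstracted before n is substituted. *)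
have n_eq : n = (n - 2).+2 by rewrite -addn2 subnK.
move: (n - 2)%N n_eq x_ok z_ok => N -> x_ok z_ok.
have G0_neq0 : gtail N z (z 1%N * tau ^+ 2) != 0.
  rewrite prodf_seq_neq0; apply/allP => j; rewrite mem_index_iota => /andP[le_2_j lt_j_n].
  by rewrite subr_eq0 eq_sym z_ok // le_2_j -ltnS.
rewrite (det_Atildemx tau_neq0) // => [|mu lt_mu_N]; last exact: x_ok.
congr (_ * _); rewrite /gtail /q -prodf_div (_ : (2 * N.+2 - 2 = 2 * N.+1)%N); last by lia.
by apply: eq_bigr => j _; rewrite -!(opprB (z j)) invrN mulrNN.
Qed.
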